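(* Let $d\ge1$ and $\delta\in(0,1]$. For $x\in\mathbb{S}^{d-1}$ let $x'_i=\lfloor x_i\sqrt d/\delta+\tfrac12\rfloor\,\delta/\sqrt d$ for $i=1,\dots,d$, and let $f(x)=x'/\|x'\|_2$. Let $\alpha',\beta'\in[0,1]$ with $\alpha'>\beta'$, and suppose \[ \delta<\frac{\alpha'-\beta'}{\sqrt{2-2\alpha'}+\sqrt{2-2\beta'}} . \] Then there exists $t\in\mathbb{R}$ such that for all $x,y\in\mathbb{S}^{d-1}$: - $\langle x,y\rangle\ge\alpha'$ implies $\langle f(x),f(y)\rangle\ge t$; - $\langle x,y\rangle\le\beta'$ implies $\langle f(x),f(y)\rangle<t$.
   Context: $\mathbb{S}^{d-1}$ denotes the Euclidean unit sphere in $\mathbb{R}^d$. *)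

(* classical reals. Vectors in R^d are functions nat -> R,
   only coordinates 0..d-1 are used. *)
From Stdlib Require Import Reals Lra.
Open Scope R_scope.

Fixpoint rsum (d : nat) (g : nat -> R) : R :=
  match d with
  | O => 0
  | S k => rsum k g + g k
  end.

Definition dot (d : nat) (x y : nat -> R) : R := rsum d (fun i => x i * y i).

Definition norm2 (d : nat) (x : nat -> R) : R := sqrt (dot d x x).

Definition on_sphere (d : nat) (x : nat -> R) : Prop := dot d x x = 1.

(* floor via Stdlib's Int_part: IZR (Int_part r) <= r < IZR (Int_part r) + 1 *)
Definition rfloor (r : R) : R := IZR (Int_part r).

Definition quant (d : nat) (delta : R) (x : nat -> R) : nat -> R :=
  fun i => rfloor (x i * sqrt (INR d) / delta + / 2) * delta / sqrt (INR d).

Definition fq (d : nat) (delta : R) (x : nat -> R) : nat -> R :=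
  fun i => quant d delta x i / norm2 d (quant d delta x).

(* Measure everything by angles [acos <u, v>] between unit vectors.  Each
   coordinate is rounded to the grid (delta / sqrt d) Z, so [|x' - x| <= delta / 2]
   and [f x] makes an angle at most [theta] with [x], where [sin theta = delta / 2].
   By the spherical triangle inequality, quantization changes the angle between
   two points by at most [2 theta], and the hypothesis on [delta] says exactly
   that [4 theta < acos beta' - acos alpha'].  So [t = cos (acos alpha' + 2 theta)]
   separates the two cases. *)

From Stdlib Require Import Reals Lra Lia.
Open Scope R_scope.

Lemma rsum_le (d : nat) (f g : nat -> R) :
  (forall i, (i < d)%nat -> f i <= g i) -> rsum d f <= rsum d g.
Proof.
  induction d as [|d IH]; intros Hfg; cbn [rsum]; [lra|].
  assert (rsum d f <= rsum d g) by (apply IH; intros; apply Hfg; lia).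
  assert (f d <= g d) by (apply Hfg; lia).
  lra.
Qed.

Lemma rsum_const (d : nat) (c : R) : rsum d (fun _ => c) = INR d * c.
Proof. induction d as [|d IH]; cbn [rsum]; [simpl; ring|]. rewrite IH, S_INR; ring. Qed.

Ltac dot_identity n := unfold dot; induction n as [|k IH]; cbn [rsum]; [ring | rewrite IH; ring].

Lemma dot_comm (d : nat) (u v : nat -> R) : dot d u v = dot d v u.
Proof. dot_identity d. Qed.

Lemma dot_sub_scale (d : nat) (u v w : nat -> R) (p q : R) :
  dot d (fun i => u i - p * v i) (fun i => w i - q * v i) =
  dot d u w - q * dot d u v - p * dot d v w + p * q * dot d v v.
Proof. dot_identity d. Qed.

Lemma dot_divr (d : nat) (u v : nat -> R) (c : R) :
  dot d u (fun i => v i / c) = dot d u v / c.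
Proof. unfold Rdiv; dot_identity d. Qed.

Lemma dot_divl (d : nat) (u v : nat -> R) (c : R) :
  dot d (fun i => u i / c) v = dot d u v / c.
Proof. unfold Rdiv; dot_identity d. Qed.

Lemma dot_self_shift (d : nat) (x q : nat -> R) :
  dot d q q = dot d x x + 2 * dot d x (fun i => q i - x i)
              + dot d (fun i => q i - x i) (fun i => q i - x i).
Proof. dot_identity d. Qed.

Lemma dot_shift (d : nat) (x q : nat -> R) :
  dot d x q = dot d x x + dot d x (fun i => q i - x i).
Proof. dot_identity d. Qed.

Lemma dot_self_nonneg (d : nat) (u : nat -> R) : 0 <= dot d u u.
Proof. unfold dot; induction d as [|d IH]; cbn [rsum]; nra. Qed.

(* [(2 C a b)^2 <= 4 A B a^2 b^2 <= (A b^2 + B a^2)^2]. *)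
Lemma cross_term_le (A B C a b : R) :
  0 <= A -> 0 <= B -> C ^ 2 <= A * B -> 2 * C * (a * b) <= A * (b * b) + B * (a * a).
Proof.
  intros HA HB HC.
  destruct (Rle_lt_dec (2 * C * (a * b)) (A * (b * b) + B * (a * a))) as [Hle|Hlt];
    [exact Hle|].
  assert (0 <= A * (b * b) + B * (a * a)) by nra.
  assert (0 < (2 * C * (a * b) - (A * (b * b) + B * (a * a)))
              * (2 * C * (a * b) + (A * (b * b) + B * (a * a))))
    by (apply Rmult_lt_0_compat; lra).
  assert (C ^ 2 * (a * b) ^ 2 <= A * B * (a * b) ^ 2) by (apply Rmult_le_compat_r; nra).
  pose proof (pow2_ge_0 (A * (b * b) - B * (a * a))).
  lra.
Qed.

Lemma dot_sq_le (d : nat) (u v : nat -> R) : (dot d u v) ^ 2 <= dot d u u * dot d v v.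
Proof.
  unfold dot; induction d as [|d IH]; cbn [rsum]; [lra|].
  pose proof (cross_term_le _ _ _ (u d) (v d)
                (dot_self_nonneg d u) (dot_self_nonneg d v) IH).
  unfold dot in *; nra.
Qed.

Lemma Rabs_dot_le (d : nat) (u v : nat -> R) :
  Rabs (dot d u v) <= norm2 d u * norm2 d v.
Proof.
  unfold norm2; rewrite <- sqrt_mult by apply dot_self_nonneg.
  rewrite <- sqrt_Rsqr_abs; apply sqrt_le_1_alt.
  rewrite Rsqr_pow2; apply dot_sq_le.
Qed.

Lemma dot_sphere_bound (d : nat) (u v : nat -> R) :
  on_sphere d u -> on_sphere d v -> -1 <= dot d u v <= 1.
Proof.
  unfold on_sphere; intros Hu Hv.
  pose proof (dot_sq_le d u v) as H; rewrite Hu, Hv in H; nra.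
Qed.

Lemma acos_decreasing (p q : R) : -1 <= p -> p <= q -> q <= 1 -> acos q <= acos p.
Proof.
  intros Hp Hpq Hq.
  destruct (Rle_lt_dec (acos q) (acos p)) as [Hle|Hlt]; [exact Hle|].
  pose proof (acos_bound p); pose proof (acos_bound q).
  pose proof (cos_decreasing_1 (acos p) (acos q)
                ltac:(lra) ltac:(lra) ltac:(lra) ltac:(lra) Hlt) as Hcos.
  rewrite !cos_acos in Hcos by lra; lra.
Qed.

Lemma acos_le_of_cos_le (a phi : R) :
  -1 <= a <= 1 -> 0 <= phi <= PI -> cos phi <= a -> acos a <= phi.
Proof.
  intros Ha Hphi Hcos.
  rewrite <- (acos_cos phi) by lra.
  pose proof (COS_bound phi); apply acos_decreasing; lra.
Qed.

Lemma cos_le_of_acos_le (a phi : R) :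
  -1 <= a <= 1 -> 0 <= phi <= PI -> acos a <= phi -> cos phi <= a.
Proof.
  intros Ha Hphi Hle; pose proof (acos_bound a).
  rewrite <- (cos_acos a) by lra.
  destruct (Req_dec (acos a) phi) as [<-|Hne]; [lra|].
  left; apply cos_decreasing_1; lra.
Qed.

Lemma lt_cos_of_lt_acos (a phi : R) :
  -1 <= a <= 1 -> 0 <= phi <= PI -> phi < acos a -> a < cos phi.
Proof.
  intros Ha Hphi Hlt; pose proof (acos_bound a).
  rewrite <- (cos_acos a) by lra.
  apply cos_decreasing_1; lra.
Qed.

Definition angle (d : nat) (u v : nat -> R) : R := acos (dot d u v).

Lemma angle_comm (d : nat) (u v : nat -> R) : angle d u v = angle d v u.
Proof. unfold angle; rewrite dot_comm; reflexivity. Qed.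

(* The components of [u] and [w] orthogonal to [v] have inner product
   [<u, w> - <u, v> <v, w>] and norms [sin (angle u v)], [sin (angle v w)];
   Cauchy-Schwarz on them is the cosine form of the triangle inequality. *)
Lemma angle_triangle (d : nat) (u v w : nat -> R) :
  on_sphere d u -> on_sphere d v -> on_sphere d w ->
  angle d u w <= angle d u v + angle d v w.
Proof.
  intros Hu Hv Hw; unfold angle.
  pose proof (dot_sphere_bound d u v Hu Hv) as Hp.
  pose proof (dot_sphere_bound d v w Hv Hw) as Hq.
  pose proof (dot_sphere_bound d u w Hu Hw) as Hr.
  set (p := dot d u v) in *; set (q := dot d v w) in *; set (r := dot d u w) in *.
  pose proof (acos_bound p); pose proof (acos_bound q); pose proof (acos_bound r).
  destruct (Rle_lt_dec PI (acos p + acos q)) as [Hge|Hlt]; [lra|].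
  apply acos_le_of_cos_le; [lra | lra |].
  rewrite cos_plus, !cos_acos, !sin_acos by lra.
  assert (Hortho : dot d (fun i => u i - p * v i) (fun i => w i - q * v i) = r - p * q).
  { rewrite dot_sub_scale; unfold on_sphere in Hv; rewrite Hv; fold p q r; ring. }
  assert (Hnorm : forall (z : nat -> R) c, on_sphere d z -> c = dot d z v ->
                  norm2 d (fun i => z i - c * v i) = sqrt (1 - c²)).
  { intros z c Hz ->; unfold norm2; rewrite dot_sub_scale, (dot_comm d v z).
    unfold on_sphere in Hz, Hv; rewrite Hz, Hv; f_equal; unfold Rsqr; ring. }
  pose proof (Rabs_dot_le d (fun i => u i - p * v i) (fun i => w i - q * v i)) as Hcs.
  rewrite Hortho, (Hnorm u p Hu eq_refl), (Hnorm w q Hw) in Hcs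
    by (unfold q; apply dot_comm).
  pose proof (Rle_abs (- (r - p * q))); rewrite Rabs_Ropp in *; lra.
Qed.

Lemma angle_perturb (d : nat) (x y x' y' : nat -> R) (theta : R) :
  on_sphere d x -> on_sphere d y -> on_sphere d x' -> on_sphere d y' ->
  angle d x x' <= theta -> angle d y y' <= theta ->
  angle d x' y' <= angle d x y + 2 * theta /\ angle d x y <= angle d x' y' + 2 * theta.
Proof.
  intros Hx Hy Hx' Hy' Hxx Hyy.
  pose proof (angle_triangle d x' x y' Hx' Hx Hy').
  pose proof (angle_triangle d x y y' Hx Hy Hy').
  pose proof (angle_triangle d x x' y Hx Hx' Hy).
  pose proof (angle_triangle d x' y' y Hx' Hy' Hy).
  rewrite (angle_comm d x' x) in *; rewrite (angle_comm d y' y) in *; lra.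
Qed.

Lemma quant_sub_sq_le (d : nat) (delta : R) (x : nat -> R) (i : nat) :
  (1 <= d)%nat -> 0 < delta ->
  (quant d delta x i - x i) ^ 2 <= delta ^ 2 / (4 * INR d).
Proof.
  intros Hd Hdelta.
  assert (Hn : 0 < INR d) by (apply lt_0_INR; lia).
  set (s := sqrt (INR d)).
  assert (Hs : 0 < s) by (apply sqrt_lt_R0; lra).
  assert (Hss : s * s = INR d) by (apply sqrt_sqrt; lra).
  set (u := x i * s / delta).
  set (F := rfloor (u + / 2)).
  assert (HF : u - / 2 < F <= u + / 2).
  { unfold F, rfloor; destruct (base_Int_part (u + / 2)); lra. }
  assert (Hquant : quant d delta x i - x i = (F - u) * delta / s).
  { unfold quant; fold s u F; unfold u; field; lra. }
  rewrite Hquant, <- Hss.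
  replace (((F - u) * delta / s) ^ 2) with ((F - u) ^ 2 * (delta ^ 2 / (s * s)))
    by (field; lra).
  replace (delta ^ 2 / (4 * (s * s))) with (/ 4 * (delta ^ 2 / (s * s))) by (field; lra).
  apply Rmult_le_compat_r; [left; apply Rdiv_lt_0_compat; nra | nra].
Qed.

Lemma dot_quant_err_le (d : nat) (delta : R) (x : nat -> R) :
  (1 <= d)%nat -> 0 < delta ->
  dot d (fun i => quant d delta x i - x i) (fun i => quant d delta x i - x i)
  <= (delta / 2) ^ 2.
Proof.
  intros Hd Hdelta.
  assert (Hn : 0 < INR d) by (apply lt_0_INR; lia).
  unfold dot; eapply Rle_trans.
  - apply (rsum_le d _ (fun _ => delta ^ 2 / (4 * INR d))).
    intros i _; replace (_ * _) with ((quant d delta x i - x i) ^ 2) by ring.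
    now apply quant_sub_sq_le.
  - rewrite rsum_const; right; field; lra.
Qed.

Lemma on_sphere_normalize (d : nat) (q : nat -> R) :
  0 < dot d q q -> on_sphere d (fun i => q i / norm2 d q).
Proof.
  intros Hq; unfold on_sphere.
  rewrite dot_divl, dot_divr; unfold norm2.
  assert (Hs : 0 < sqrt (dot d q q)) by (apply sqrt_lt_R0; lra).
  field_simplify; [|lra].
  rewrite <- Rsqr_pow2, Rsqr_sqrt by lra; field; lra.
Qed.

(* With [e = q - x] and [s = <x, e>]: [<x, q> = 1 + s], [|q|^2 = 1 + 2 s + |e|^2], and
   [(1 + s)^2 - (1 - |e|^2) (1 + 2 s + |e|^2) = (s + |e|^2)^2]. *)
Lemma dot_normalize_ge (d : nat) (x q : nat -> R) (E : R) :
  on_sphere d x -> dot d (fun i => q i - x i) (fun i => q i - x i) <= E -> E < 1 ->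
  0 < dot d q q /\ sqrt (1 - E) <= dot d x (fun i => q i / norm2 d q).
Proof.
  intros Hx HE HE1; unfold on_sphere in Hx.
  set (e := fun i => q i - x i) in HE.
  set (s := dot d x e).
  pose proof (dot_self_nonneg d e) as He.
  pose proof (dot_sq_le d x e) as Hs; rewrite Hx in Hs; fold s in Hs.
  pose proof (dot_self_shift d x q) as Hqq; rewrite Hx in Hqq; fold e s in Hqq.
  pose proof (dot_shift d x q) as Hxq; rewrite Hx in Hxq; fold e s in Hxq.
  assert (Hpos : 0 < dot d q q) by nra.
  split; [exact Hpos|].
  rewrite dot_divr, Hxq; unfold norm2.
  assert (Hsq : 0 < sqrt (dot d q q)) by (apply sqrt_lt_R0; lra).
  assert (H1s : 0 < 1 + s) by nra.
  rewrite <- (sqrt_pow2 ((1 + s) / sqrt (dot d q q))) by (left; apply Rdiv_lt_0_compat; lra).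
  apply sqrt_le_1_alt.
  replace (((1 + s) / sqrt (dot d q q)) ^ 2) with ((1 + s) ^ 2 / dot d q q)
    by (rewrite <- (pow2_sqrt (dot d q q)) at 1 by lra; field; lra).
  apply (Rmult_le_reg_r (dot d q q)); [lra|].
  unfold Rdiv; rewrite Rmult_assoc, Rinv_l, Rmult_1_r by lra.
  assert ((1 - E) * dot d q q <= (1 - dot d e e) * dot d q q)
    by (apply Rmult_le_compat_r; lra).
  pose proof (pow2_ge_0 (s + dot d e e)).
  rewrite Hqq in *; lra.
Qed.

Definition quant_angle (delta : R) : R := acos (sqrt (1 - (delta / 2) ^ 2)).

Lemma angle_fq_le (d : nat) (delta : R) (x : nat -> R) :
  (1 <= d)%nat -> 0 < delta < 2 -> on_sphere d x ->
  on_sphere d (fq d delta x) /\ angle d x (fq d delta x) <= quant_angle delta.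
Proof.
  intros Hd Hdelta Hx.
  destruct (dot_normalize_ge d x (quant d delta x) ((delta / 2) ^ 2) Hx
              (dot_quant_err_le d delta x Hd ltac:(lra)) ltac:(nra)) as [Hq Hdot].
  assert (Hf : on_sphere d (fq d delta x)) by now apply on_sphere_normalize.
  split; [exact Hf|].
  pose proof (dot_sphere_bound d x _ Hx Hf).
  pose proof (sqrt_pos (1 - (delta / 2) ^ 2)).
  apply acos_decreasing; [lra | exact Hdot | lra].
Qed.

Lemma cos_half_sin (phi : R) : cos phi = 1 - 2 * sin (phi / 2) ^ 2.
Proof. replace phi with (2 * (phi / 2)) at 1 by field; rewrite cos_2a_sin; ring. Qed.

Lemma sqrt_two_sub_two_cos (phi : R) :
  0 <= phi <= PI -> sqrt (2 - 2 * cos phi) = 2 * sin (phi / 2).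
Proof.
  intros Hphi.
  assert (0 <= sin (phi / 2)) by (apply sin_ge_0; lra).
  rewrite cos_half_sin, <- sqrt_pow2 by lra; f_equal; ring.
Qed.

Lemma sqrt_one_sub_sq_bound (a : R) : 0 <= sqrt (1 - a ^ 2) <= 1.
Proof.
  split; [apply sqrt_pos|].
  rewrite <- sqrt_1 at 2; apply sqrt_le_1_alt.
  pose proof (pow2_ge_0 a); lra.
Qed.

Lemma sin_quant_angle (delta : R) : 0 <= delta <= 2 -> sin (quant_angle delta) = delta / 2.
Proof.
  intros Hdelta; unfold quant_angle.
  pose proof (sqrt_one_sub_sq_bound (delta / 2)).
  rewrite sin_acos by lra.
  rewrite Rsqr_sqrt by nra.
  replace (1 - (1 - (delta / 2) ^ 2)) with ((delta / 2) ^ 2) by ring.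
  apply sqrt_pow2; lra.
Qed.

Lemma quant_angle_bound (delta : R) : 0 <= quant_angle delta <= PI / 2.
Proof.
  unfold quant_angle; pose proof (acos_bound (sqrt (1 - (delta / 2) ^ 2))).
  pose proof (sqrt_one_sub_sq_bound (delta / 2)).
  split; [lra|].
  rewrite <- acos_0; apply acos_decreasing; lra.
Qed.

(* With [a = acos alpha'] and [b = acos beta'] the hypothesis reads
   [delta < sin (b/2) - sin (a/2) = 2 cos ((a+b)/4) sin ((b-a)/4) <= 2 sin ((b-a)/4)]. *)
Lemma quant_angle_gap (delta alpha' beta' : R) :
  0 <= delta <= 2 -> 0 <= beta' -> beta' < alpha' -> alpha' <= 1 ->
  delta < (alpha' - beta') / (sqrt (2 - 2 * alpha') + sqrt (2 - 2 * beta')) ->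
  4 * quant_angle delta < acos beta' - acos alpha'.
Proof.
  intros Hdelta Hb Hba Ha Hgap.
  set (a := acos alpha'); set (b := acos beta').
  pose proof PI_RGT_0.
  assert (Hab : 0 <= a <= b /\ b <= PI / 2).
  { pose proof (acos_bound alpha'); unfold a, b; rewrite <- acos_0.
    split; [split; [lra | apply acos_decreasing; lra] | apply acos_decreasing; lra]. }
  assert (Hca : alpha' = 1 - 2 * sin (a / 2) ^ 2)
    by (rewrite <- cos_half_sin; unfold a; rewrite cos_acos; lra).
  assert (Hcb : beta' = 1 - 2 * sin (b / 2) ^ 2)
    by (rewrite <- cos_half_sin; unfold b; rewrite cos_acos; lra).
  assert (Hsa : sqrt (2 - 2 * alpha') = 2 * sin (a / 2))
    by (rewrite <- sqrt_two_sub_two_cos by lra; unfold a; rewrite cos_acos by lra; reflexivity).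
  assert (Hsb : sqrt (2 - 2 * beta') = 2 * sin (b / 2))
    by (rewrite <- sqrt_two_sub_two_cos by lra; unfold b; rewrite cos_acos by lra; reflexivity).
  assert (0 <= sin (a / 2)) by (apply sin_ge_0; lra).
  assert (0 <= sin (b / 2)) by (apply sin_ge_0; lra).
  assert (Hratio : (alpha' - beta') / (sqrt (2 - 2 * alpha') + sqrt (2 - 2 * beta'))
                   = sin (b / 2) - sin (a / 2)).
  { rewrite Hsa, Hsb, Hca, Hcb; field; nra. }
  rewrite Hratio, form4 in Hgap.
  set (w := (b / 2 - a / 2) / 2) in Hgap.
  assert (0 <= sin w) by (apply sin_ge_0; unfold w; lra).
  assert (0 <= cos ((b / 2 + a / 2) / 2) <= 1)
    by (split; [apply cos_ge_0 | apply COS_bound]; lra).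
  assert (cos ((b / 2 + a / 2) / 2) * sin w <= 1 * sin w) by (apply Rmult_le_compat_r; lra).
  assert (Hsin : sin (quant_angle delta) < sin w) by (rewrite sin_quant_angle by lra; lra).
  assert (0 <= w <= PI / 2) by (unfold w; lra).
  pose proof (quant_angle_bound delta).
  pose proof (sin_increasing_0 (quant_angle delta) w
                ltac:(lra) ltac:(lra) ltac:(lra) ltac:(lra) Hsin).
  unfold w in *; lra.
Qed.

Theorem mainTheorem6 (d : nat) (delta alpha' beta' : R) :
  (1 <= d)%nat ->
  0 < delta <= 1 ->
  0 <= alpha' <= 1 -> 0 <= beta' <= 1 -> alpha' > beta' ->
  delta < (alpha' - beta') / (sqrt (2 - 2 * alpha') + sqrt (2 - 2 * beta')) ->
  exists t : R,
    forall x y : nat -> R, on_sphere d x -> on_sphere d y ->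
      (dot d x y >= alpha' -> dot d (fq d delta x) (fq d delta y) >= t) /\
      (dot d x y <= beta' -> dot d (fq d delta x) (fq d delta y) < t).
Proof.
  intros Hd Hdelta Ha Hb Hab Hgap.
  pose proof (quant_angle_gap delta alpha' beta' ltac:(lra) ltac:(lra) Hab ltac:(lra) Hgap).
  set (theta := quant_angle delta) in *.
  pose proof (quant_angle_bound delta); pose proof PI_RGT_0.
  assert (acos alpha' <= PI / 2) by (rewrite <- acos_0; apply acos_decreasing; lra).
  pose proof (acos_bound alpha'); pose proof (acos_bound beta').
  exists (cos (acos alpha' + 2 * theta)).
  intros x y Hx Hy.
  destruct (angle_fq_le d delta x Hd ltac:(lra) Hx) as [Hfx Hthx].
  destruct (angle_fq_le d delta y Hd ltac:(lra) Hy) as [Hfy Hthy].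
  destruct (angle_perturb d x y _ _ theta Hx Hy Hfx Hfy Hthx Hthy) as [Hup Hdown].
  pose proof (dot_sphere_bound d x y Hx Hy).
  pose proof (dot_sphere_bound d _ _ Hfx Hfy).
  unfold angle in Hup, Hdown.
  split; intros Hxy.
  - assert (acos (dot d x y) <= acos alpha') by (apply acos_decreasing; lra).
    apply Rle_ge, cos_le_of_acos_le; lra.
  - assert (acos beta' <= acos (dot d x y)) by (apply acos_decreasing; lra).
    apply lt_cos_of_lt_acos; lra.
Qed.
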